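(* Let $\mathcal K_0$ be one of the following five classes of neighborhood frames: the monotonic frames, the quasi-filter frames, the augmented quasi-filter frames, the filter frames, or the augmented filter frames, and let $\mathcal K$ be CPL-elementary relative to $\mathcal K_0$, i.e. $\mathcal K=\{F\in\mathcal K_0: F\models T\}$ for some set $T$ of $L_=$-sentences. Let $\mathcal S$ be the least class of BAMs containing $\mathcal K^+=\{F^+:F\in\mathcal K\}$ and closed under subalgebras. Then (1) $\mathcal S$ is closed under canonical extensions, and (2) $\mathcal S$ is closed under ultraproducts.
   Context: A neighborhood frame is a pair $F=(F,N^F)$ with $N^F: F\to\mathscr P(\mathscr P(F))$. It is monotonic if each $N^F(w)$ is closed under supersets; quasi-filter if it is monotonic and each $N^F(w)$ is closed under intersections of nonempty finite families; filter if it is quasi-filter and each $N^F(w)$ is nonempty; augmented quasi-filter if each $N^F(w)$ is empty or a principal upset of $\mathscr P(F)$; augmented filter if each $N^F(w)$ is a principal upset. $L_=$ is the least set of formulas containing equality atoms and closed under Boolean combinations, existential quantification, and formation of $x\,\Box_y\,\phi$ ($y$ bound). Satisfaction: as in first-order logic, with $F\models w\,\Box_y\,\phi(y)$ iff $\{v: F\models\phi(v)\}\in N^F(w)$. A BAM is a Boolean algebra $A$ with a monotone map $\Box:A\to A$; subalgebras, isomorphisms and ultraproducts are taken in the usual algebraic sense for this signature. $F^+=(\mathscr P(F),\Box^F)$ with $\Box^F(X)=\{w: X\in N^F(w)\}$. For a BAM $A$, $\mathrm{Uf}(A)$ is its set of ultrafilters, $[a]=\{u: a\in u\}$, closed sets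 are intersections of sets $[a]$, and the canonical extension is $A^\sigma=(\mathscr P(\mathrm{Uf}(A)),\Box^\sigma)$ with $\Box^\sigma(u)=\bigcup_{K\text{ closed},K\subseteq u}\bigcap_{[a]\supseteq K}[\Box(a)]$. *)

From Stdlib Require Import Arith.

(* Subsets of a type are predicates.  Domains are nonempty (first-order
   convention). *)
Record Frame := mkFrame {
  fW : Type;
  fN : fW -> (fW -> Prop) -> Prop;
  fW_inh : inhabited fW
}.

Definition subset {X : Type} (A B : X -> Prop) : Prop := forall x, A x -> B x.

Definition monotonic (F : Frame) : Prop :=
  forall w (X Y : fW F -> Prop), fN F w X -> subset X Y -> fN F w Y.

Definition fin_inter_closed (F : Frame) : Prop :=
  forall w (n : nat) (X : nat -> fW F -> Prop),
    (forall i, i <= n -> fN F w (X i)) ->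
    fN F w (fun v => forall i, i <= n -> X i v).

Definition quasi_filter (F : Frame) : Prop :=
  monotonic F /\ fin_inter_closed F.

Definition filter_frame (F : Frame) : Prop :=
  quasi_filter F /\ forall w, exists X, fN F w X.

Definition principal_upset (F : Frame) (w : fW F) : Prop :=
  exists X0 : fW F -> Prop, forall X, fN F w X <-> subset X0 X.

Definition aug_quasi_filter (F : Frame) : Prop :=
  forall w, (forall X, ~ fN F w X) \/ principal_upset F w.

Definition aug_filter (F : Frame) : Prop :=
  forall w, principal_upset F w.

Inductive FrameClass := Monotonic | QuasiFilter | AugQuasiFilter | Filter | AugFilter.

Definition in_class (c : FrameClass) (F : Frame) : Prop :=
  match c with
  | Monotonic => monotonic F
  | QuasiFilter => quasi_filter F
  | AugQuasiFilter => aug_quasi_filter F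
  | Filter => filter_frame F
  | AugFilter => aug_filter F
  end.

Inductive formula :=
  | FEq  : nat -> nat -> formula
  | FNeg : formula -> formula
  | FAnd : formula -> formula -> formula
  | FOr  : formula -> formula -> formula
  | FEx  : nat -> formula -> formula
  | FBox : nat -> nat -> formula -> formula.    (* x Box_y phi, y bound *)

Fixpoint free (phi : formula) (z : nat) : Prop :=
  match phi with
  | FEq x y => z = x \/ z = y
  | FNeg p => free p z
  | FAnd p q | FOr p q => free p z \/ free q z
  | FEx x p => z <> x /\ free p z
  | FBox x y p => z = x \/ (z <> y /\ free p z)
  end.

Definition sentence (phi : formula) : Prop := forall z, ~ free phi z.

Definition upd {W : Type} (g : nat -> W) (y : nat) (v : W) : nat -> W :=
  fun z => if Nat.eqb z y then v else g z.

Fixpoint sat (F : Frame) (g : nat -> fW F) (phi : formula) : Prop :=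
  match phi with
  | FEq x y => g x = g y
  | FNeg p => ~ sat F g p
  | FAnd p q => sat F g p /\ sat F g q
  | FOr p q => sat F g p \/ sat F g q
  | FEx x p => exists v, sat F (upd g x v) p
  | FBox x y p => fN F (g x) (fun v => sat F (upd g y v) p)
  end.

Definition models (F : Frame) (phi : formula) : Prop :=
  forall g : nat -> fW F, sat F g phi.

Definition elem_class (c : FrameClass) (T : formula -> Prop) (F : Frame) : Prop :=
  in_class c F /\ forall phi, T phi -> models F phi.

Record BAM := mkBAM {
  carrier : Type;
  bjoin : carrier -> carrier -> carrier;
  bmeet : carrier -> carrier -> carrier;
  bcompl : carrier -> carrier;
  bbot : carrier;
  btop : carrier;
  bbox : carrier -> carrier
}.

Definition ble (A : BAM) (a b : carrier A) : Prop := bmeet A a b = a.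

Definition is_BAM (A : BAM) : Prop :=
  (forall a b, bjoin A a b = bjoin A b a) /\
  (forall a b, bmeet A a b = bmeet A b a) /\
  (forall a b c, bjoin A a (bjoin A b c) = bjoin A (bjoin A a b) c) /\
  (forall a b c, bmeet A a (bmeet A b c) = bmeet A (bmeet A a b) c) /\
  (forall a b, bjoin A a (bmeet A a b) = a) /\
  (forall a b, bmeet A a (bjoin A a b) = a) /\
  (forall a b c, bmeet A a (bjoin A b c) = bjoin A (bmeet A a b) (bmeet A a c)) /\
  (forall a, bjoin A a (bcompl A a) = btop A) /\
  (forall a, bmeet A a (bcompl A a) = bbot A) /\
  (forall a b, ble A a b -> ble A (bbox A a) (bbox A b)).

Definition is_hom (A B : BAM) (f : carrier A -> carrier B) : Prop :=
  (forall a b, f (bjoin A a b) = bjoin B (f a) (f b)) /\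
  (forall a b, f (bmeet A a b) = bmeet B (f a) (f b)) /\
  (forall a, f (bcompl A a) = bcompl B (f a)) /\
  f (bbot A) = bbot B /\ f (btop A) = btop B /\
  (forall a, f (bbox A a) = bbox B (f a)).

Definition embeds (A B : BAM) : Prop :=
  exists f : carrier A -> carrier B, is_hom A B f /\ (forall a b, f a = f b -> a = b).

Definition cplx (F : Frame) : BAM := {|
  carrier := fW F -> Prop;
  bjoin := fun X Y w => X w \/ Y w;
  bmeet := fun X Y w => X w /\ Y w;
  bcompl := fun X w => ~ X w;
  bbot := fun _ => False;
  btop := fun _ => True;
  bbox := fun X w => fN F w X
|}.

Definition closed_under_sub (C : BAM -> Prop) : Prop :=
  forall A B, C B -> embeds A B -> C A.

Definition S_class (K : Frame -> Prop) (A : BAM) : Prop :=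
  forall C : BAM -> Prop,
    (forall F, K F -> C (cplx F)) -> closed_under_sub C -> C A.

Definition is_uf (A : BAM) (u : carrier A -> Prop) : Prop :=
  u (btop A) /\ ~ u (bbot A) /\
  (forall a b, u a -> u b -> u (bmeet A a b)) /\
  (forall a b, u a -> ble A a b -> u b) /\
  (forall a, u a \/ u (bcompl A a)).

Definition Uf (A : BAM) : Type := { u : carrier A -> Prop | is_uf A u }.

Definition bracket (A : BAM) (a : carrier A) : Uf A -> Prop :=
  fun u => proj1_sig u a.

Definition closed_set (A : BAM) (K : Uf A -> Prop) : Prop :=
  exists D : carrier A -> Prop, forall u, K u <-> (forall a, D a -> bracket A a u).

Definition box_sigma (A : BAM) (X : Uf A -> Prop) : Uf A -> Prop :=
  fun u => exists K, closed_set A K /\ subset K X /\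
             (forall a, subset K (bracket A a) -> bracket A (bbox A a) u).

Definition can_ext (A : BAM) : BAM := {|
  carrier := Uf A -> Prop;
  bjoin := fun X Y w => X w \/ Y w;
  bmeet := fun X Y w => X w /\ Y w;
  bcompl := fun X w => ~ X w;
  bbot := fun _ => False;
  btop := fun _ => True;
  bbox := box_sigma A
|}.

Definition is_set_uf {I : Type} (U : (I -> Prop) -> Prop) : Prop :=
  U (fun _ => True) /\ ~ U (fun _ => False) /\
  (forall X Y, U X -> U Y -> U (fun i => X i /\ Y i)) /\
  (forall X Y, U X -> subset X Y -> U Y) /\
  (forall X, U X \/ U (fun i => ~ X i)).

(* B is (isomorphic to) the ultraproduct prod_i A_i / U : there is a
   surjective homomorphism from the direct product onto B whose kernel is
   the congruence  x ~ y  iff  {i | x i = y i} in U. *)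
Definition is_ultraproduct {I : Type} (U : (I -> Prop) -> Prop)
    (A : I -> BAM) (B : BAM) : Prop :=
  exists pi : (forall i, carrier (A i)) -> carrier B,
    (forall b, exists x, pi x = b) /\
    (forall x y, pi x = pi y <-> U (fun i => x i = y i)) /\
    (forall x y, pi (fun i => bjoin (A i) (x i) (y i)) = bjoin B (pi x) (pi y)) /\
    (forall x y, pi (fun i => bmeet (A i) (x i) (y i)) = bmeet B (pi x) (pi y)) /\
    (forall x, pi (fun i => bcompl (A i) (x i)) = bcompl B (pi x)) /\
    pi (fun i => bbot (A i)) = bbot B /\
    pi (fun i => btop (A i)) = btop B /\
    (forall x, pi (fun i => bbox (A i) (x i)) = bbox B (pi x)).

(* Both parts reduce, through the description of S as the algebras that embed
   into some F^+ with F in K, to constructions on frames.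

   Ultraproducts: if each A_i embeds into F_i^+ by f_i, the ultraproduct of the
   A_i embeds into (prod_i F_i / U)^+ by sending the class of x to the internal
   set prod_i f_i(x_i) / U.  Los's theorem holds for ultraproducts of monotonic
   neighbourhood frames, so prod_i F_i / U satisfies T, and each of the five
   frame conditions transfers to it.

   Canonical extensions: if A embeds into F^+ by f, iterate ultrapowers
   F = F_0, F_1, F_2, ... by a fine ultrafilter on the finite lists of subsets
   of F and let G be the direct limit, an elementary extension of F in the same
   frame class.  A point q of G determines the ultrafilter type(q) of those a
   whose lifted image f(a) contains q.  Every ultrafilter finitely realised
   inside a neighbourhood at level n is realised one level up, so every
   ultrafilter is a type and the neighbourhoods of q match the closed sets
   witnessing the canonical box at type(q).  Hence X |-> {q | type(q) in X}
   embeds A^sigma into G^+. *)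

From Stdlib Require Import List Arith Lia Classical ClassicalEpsilon ChoiceFacts
  FunctionalExtensionality PropExtensionality ProofIrrelevance Eqdep_dec.
From mathcomp Require filter.

Lemma dep_choice {A : Type} {B : A -> Type} (P : forall a, B a -> Prop) :
  (forall a, exists b, P a b) -> exists f : (forall a, B a), forall a, P a (f a).
Proof. apply (non_dep_dep_functional_choice choice). Qed.

Lemma pred_ext {X : Type} (P Q : X -> Prop) : (forall x, P x <-> Q x) -> P = Q.
Proof.
  intros H. apply functional_extensionality. intros x.
  apply propositional_extensionality, H.
Qed.

Section SetUltrafilter.
Variables (I : Type) (U : (I -> Prop) -> Prop).
Hypothesis HU : is_set_uf U.

Lemma uf_mono (X Y : I -> Prop) : U X -> (forall i, X i -> Y i) -> U Y.
Proof. destruct HU as [_ [_ [_ [H _]]]]. intros; eapply H; eauto. Qed.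

Lemma uf_and (X Y : I -> Prop) : U X -> U Y -> U (fun i => X i /\ Y i).
Proof. destruct HU as [_ [_ [H _]]]. auto. Qed.

Lemma uf_em (X : I -> Prop) : U X \/ U (fun i => ~ X i).
Proof. destruct HU as [_ [_ [_ [_ H]]]]. auto. Qed.

Lemma uf_all (X : I -> Prop) : (forall i, X i) -> U X.
Proof. intros H. apply (uf_mono (fun _ => True)); auto. apply HU. Qed.

Lemma uf_ex (X : I -> Prop) : U X -> exists i, X i.
Proof.
  intros H. apply NNPP. intros C. apply HU. apply (uf_mono _ _ H).
  intros i Hi. apply C. eauto.
Qed.

Lemma uf_ext (X Y : I -> Prop) : (forall i, X i <-> Y i) -> (U X <-> U Y).
Proof. intros H; split; intros HX; apply (uf_mono _ _ HX); firstorder. Qed.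

Lemma uf_and_iff (X Y : I -> Prop) : U (fun i => X i /\ Y i) <-> U X /\ U Y.
Proof.
  split.
  - intros H; split; apply (uf_mono _ _ H); tauto.
  - intros [HX HY]; apply uf_and; auto.
Qed.

Lemma uf_not (X : I -> Prop) : U (fun i => ~ X i) <-> ~ U X.
Proof.
  split.
  - intros H1 H2. destruct (uf_ex _ (uf_and _ _ H1 H2)) as [i [Hn Hi]]. auto.
  - intros H. destruct (uf_em X); tauto.
Qed.

Lemma uf_or (X Y : I -> Prop) : U (fun i => X i \/ Y i) <-> U X \/ U Y.
Proof.
  split.
  - intros H. destruct (uf_em X) as [HX|HX]; [left; auto|].
    right. apply (uf_mono _ _ (uf_and _ _ H HX)). tauto.
  - intros [H|H]; apply (uf_mono _ _ H); tauto.
Qed.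

Lemma uf_const (P : Prop) : U (fun _ => P) <-> P.
Proof.
  split.
  - intros H. destruct (uf_ex _ H); auto.
  - intros; apply uf_all; auto.
Qed.
Lemma uf_choice {B : I -> Type} (P : forall i, B i -> Prop) :
  (forall i, inhabited (B i)) -> U (fun i => exists b, P i b) ->
  exists f : forall i, B i, U (fun i => P i (f i)).
Proof.
  intros Hinh H.
  assert (Hc : forall i, exists b : B i, (exists b', P i b') -> P i b).
  { intros i. destruct (classic (exists b', P i b')) as [[b Hb]|N].
    - exists b; auto.
    - destruct (Hinh i) as [b0]. exists b0. intros C; contradiction. }
  destruct (dep_choice _ Hc) as [f Hf]. exists f.
  apply (uf_mono _ _ H). intros i. apply Hf.
Qed.
End SetUltrafilter.

(* Indexing by finite lists turns pointwise finite satisfiability into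
   satisfiability in an ultrapower. *)
Lemma fine_ultrafilter (T : Type) :
  exists U : (list T -> Prop) -> Prop, is_set_uf U /\ forall t, U (fun l => In t l).
Proof.
  set (F := fun X : list T -> Prop => exists l0, forall l, incl l0 l -> X l).
  assert (PF : mathcomp.classical.filter.ProperFilter F).
  { constructor.
    - intros [l0 H]. apply (H l0). apply incl_refl.
    - constructor.
      + exists nil. intros; exact I.
      + intros A B [l0 H0] [l1 H1]. exists (l0 ++ l1). intros l Hl.
        split; [apply H0|apply H1]; intros x Hx; apply Hl; apply in_or_app; auto.
      + intros P Q HPQ [l0 H]. exists l0. intros l Hl. apply HPQ, H, Hl. }
  destruct (mathcomp.classical.filter.ultraFilterLemma PF) as [G [GU FG]].
  exists G. split.
  - split; [|split; [|split; [|split]]].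
    + apply (@mathcomp.classical.filter.filterT _ G). apply GU.
    + apply (@mathcomp.classical.filter.filter_not_empty _ G). apply GU.
    + intros X Y HX HY. apply (@mathcomp.classical.filter.filterI _ G); auto. apply GU.
    + intros X Y HX HXY. exact (@mathcomp.classical.filter.filterS _ G _ X Y HXY HX).
    + intros X. apply (mathcomp.classical.filter.in_ultra_setVsetC X GU).
  - intros t. apply FG. exists (t :: nil). intros l Hl. apply Hl. left; reflexivity.
Qed.

Section Quotient.
Variables (T : Type) (R : T -> T -> Prop).
Hypothesis R_refl : forall t, R t t.
Hypothesis R_sym : forall t t', R t t' -> R t' t.
Hypothesis R_trans : forall t t' t'', R t t' -> R t' t'' -> R t t''.

Definition quot := {P : T -> Prop | exists t, P = R t}.
Definition cls (t : T) : quot := exist _ (R t) (ex_intro _ t eq_refl).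
Definition rep (q : quot) : T :=
  proj1_sig (constructive_indefinite_description _ (proj2_sig q)).

Lemma cls_rep q : cls (rep q) = q.
Proof.
  unfold rep. destruct (constructive_indefinite_description _ (proj2_sig q)) as [t Ht].
  destruct q as [P HP]. apply subset_eq_compat. symmetry; exact Ht.
Qed.

Lemma cls_eq t t' : cls t = cls t' <-> R t t'.
Proof.
  split.
  - intros e. assert (E : R t = R t') by apply (f_equal (@proj1_sig _ _) e).
    rewrite E. apply R_refl.
  - intros H. apply subset_eq_compat. apply pred_ext. intros x; split; intros Hx.
    + apply R_trans with t; auto.
    + apply R_trans with t'; auto.
Qed.

Lemma rep_cls t : R (rep (cls t)) t.
Proof. apply R_sym, cls_eq. rewrite cls_rep. reflexivity. Qed.
End Quotient.
Arguments cls {T R}.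
Arguments rep {T R}.

Lemma upd_pointwise {I : Type} {T : I -> Type} (G : nat -> forall i, T i) x
    (h : forall i, T i) i :
  (fun k => upd G x h k i) = upd (fun k => G k i) x (h i).
Proof.
  apply functional_extensionality. intros k. unfold upd. destruct (Nat.eqb k x); reflexivity.
Qed.

Lemma sat_agree (F : Frame) phi : forall g g' : nat -> fW F,
  (forall z, free phi z -> g z = g' z) -> (sat F g phi <-> sat F g' phi).
Proof.
  induction phi as [x y|p IH|p IH q IH2|p IH q IH2|x p IH|x y p IH];
    intros g g' H; simpl in *.
  - rewrite (H x), (H y) by auto. tauto.
  - rewrite (IH g g' H). tauto.
  - rewrite (IH g g'), (IH2 g g') by auto. tauto.
  - rewrite (IH g g'), (IH2 g g') by auto. tauto.
  - assert (C : forall v z, free p z -> upd g x v z = upd g' x v z).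
    { intros v z Hz. unfold upd. destruct (Nat.eqb z x) eqn:E; auto.
      apply H. split; auto. apply Nat.eqb_neq; auto. }
    split; intros [v Hv]; exists v; apply (IH _ _ (C v)); exact Hv.
  - rewrite (H x) by auto.
    replace (fun v => sat F (upd g y v) p) with (fun v => sat F (upd g' y v) p);
      [tauto|].
    apply pred_ext. intros v. symmetry. apply IH. intros z Hz. unfold upd.
    destruct (Nat.eqb z y) eqn:E; auto. apply H. right. split; auto.
    apply Nat.eqb_neq; auto.
Qed.

Lemma models_sentence F phi (g : nat -> fW F) :
  sentence phi -> sat F g phi -> models F phi.
Proof.
  intros Hs Hg g'. apply (sat_agree F phi g); auto.
  intros z Hz. destruct (Hs z Hz).
Qed.

Definition meet_closed (F : Frame) : Prop :=
  forall w X Y, fN F w X -> fN F w Y -> fN F w (fun v => X v /\ Y v).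

Lemma fin_inter_closed_meet_closed F : fin_inter_closed F -> meet_closed F.
Proof.
  intros H w X Y HX HY.
  set (Z := fun i => match i with 0 => X | _ => Y end).
  replace (fun v => X v /\ Y v) with (fun v => forall i, i <= 1 -> Z i v).
  - apply H. intros [|[|i]] Hi; [exact HX|exact HY|lia].
  - apply pred_ext. intros v. split.
    + intros Hv. exact (conj (Hv 0 ltac:(lia)) (Hv 1 ltac:(lia))).
    + intros [Hx Hy] [|[|i]] Hi; [exact Hx|exact Hy|lia].
Qed.

Lemma meet_closed_fin_inter_closed F :
  monotonic F -> meet_closed F -> fin_inter_closed F.
Proof.
  intros Hm Hc w n X H. induction n as [|n IH].
  - apply (Hm w (X 0)); auto. intros v Hv i Hi. replace i with 0 by lia. exact Hv.
  - apply (Hm w (fun v => (forall i, i <= n -> X i v) /\ X (S n) v)).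
    + apply Hc; auto.
    + intros v [Hv HSn] i Hi. destruct (Nat.eq_dec i (S n)) as [->|Hne]; auto.
      apply Hv. lia.
Qed.

Lemma quasi_filter_meet_closed F : quasi_filter F <-> monotonic F /\ meet_closed F.
Proof.
  split.
  - intros [Hm Hf]. split; auto. apply fin_inter_closed_meet_closed, Hf.
  - intros [Hm Hc]. split; auto. apply meet_closed_fin_inter_closed; auto.
Qed.

Lemma principal_upset_monotonic F w X Y :
  principal_upset F w -> fN F w X -> subset X Y -> fN F w Y.
Proof.
  intros [X0 HX0] HX HXY. apply HX0. apply HX0 in HX. intros v Hv; auto.
Qed.

Lemma in_class_monotonic c F : in_class c F -> monotonic F.
Proof.
  destruct c; simpl; intros H w X Y.
  - apply H.
  - apply (proj1 H).
  - intros HX. destruct (H w) as [E|P].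
    + destruct (E X HX).
    + apply (principal_upset_monotonic F w X Y P HX).
  - apply (proj1 (proj1 H)).
  - apply principal_upset_monotonic, H.
Qed.

Section Ultraproduct.
Variables (I : Type) (U : (I -> Prop) -> Prop).
Hypothesis HU : is_set_uf U.
Variable F : I -> Frame.

Definition ae_eq (x y : forall i, fW (F i)) : Prop := U (fun i => x i = y i).

Lemma ae_eq_refl x : ae_eq x x.
Proof. apply (uf_all _ _ HU); auto. Qed.

Lemma ae_eq_sym x y : ae_eq x y -> ae_eq y x.
Proof. intros H. apply (uf_mono _ _ HU _ _ H). auto. Qed.

Lemma ae_eq_trans x y z : ae_eq x y -> ae_eq y z -> ae_eq x z.
Proof.
  intros H1 H2. apply (uf_mono _ _ HU _ _ (uf_and _ _ HU _ _ H1 H2)).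
  intros i [-> ->]; auto.
Qed.

Definition uprod_pt := quot (forall i, fW (F i)) ae_eq.

Lemma cls_eq_ae (h h' : forall i, fW (F i)) : @cls _ ae_eq h = cls h' <-> ae_eq h h'.
Proof. apply cls_eq; [exact ae_eq_refl|exact ae_eq_sym|exact ae_eq_trans]. Qed.

Lemma rep_cls_ae (h : forall i, fW (F i)) : ae_eq (rep (@cls _ ae_eq h)) h.
Proof. apply rep_cls; [exact ae_eq_refl|exact ae_eq_sym|exact ae_eq_trans]. Qed.

Lemma ae_transfer (x y : forall i, fW (F i)) (P : forall i, fW (F i) -> Prop) :
  ae_eq x y -> (U (fun i => P i (x i)) <-> U (fun i => P i (y i))).
Proof.
  intros H; split; intros H2; apply (uf_mono _ _ HU _ _ (uf_and _ _ HU _ _ H H2));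
    intros i [e Hi]; [rewrite <- e|rewrite e]; auto.
Qed.

Definition internal (S : forall i, fW (F i) -> Prop) : uprod_pt -> Prop :=
  fun v => U (fun i => S i (rep v i)).

Lemma internal_cls S h : internal S (cls h) <-> U (fun i => S i (h i)).
Proof. apply ae_transfer, rep_cls_ae. Qed.

Lemma internal_subset S S' :
  subset (internal S) (internal S') -> U (fun i => subset (S i) (S' i)).
Proof.
  intros H. destruct (uf_em _ _ HU (fun i => subset (S i) (S' i))) as [ok|bad]; auto.
  exfalso.
  destruct (uf_choice _ _ HU (fun i w => S i w /\ ~ S' i w) (fun i => fW_inh (F i)))
    as [h Hh].
  { apply (uf_mono _ _ HU _ _ bad). intros i Hi. apply NNPP. intros N. apply Hi.
    intros w Hw. apply NNPP. eauto. }
  apply (uf_and_iff _ _ HU) in Hh. destruct Hh as [HS HS'].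
  apply (uf_not _ _ HU) in HS'. apply HS', internal_cls, H, internal_cls, HS.
Qed.

Lemma internal_eq S S' : internal S = internal S' -> U (fun i => S i = S' i).
Proof.
  intros E.
  assert (H1 := internal_subset S S' ltac:(rewrite E; intros v Hv; exact Hv)).
  assert (H2 := internal_subset S' S ltac:(rewrite E; intros v Hv; exact Hv)).
  apply (uf_mono _ _ HU _ _ (uf_and _ _ HU _ _ H1 H2)).
  intros i [A B]. apply pred_ext. split; auto.
Qed.

Definition uprod_nbhd (w : uprod_pt) (Y : uprod_pt -> Prop) : Prop :=
  exists S, U (fun i => fN (F i) (rep w i) (S i)) /\ subset (internal S) Y.

Lemma uprod_inh : inhabited uprod_pt.
Proof.
  constructor. exact (cls (fun i => epsilon (fW_inh (F i)) (fun _ => True))).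
Qed.

Definition uprod : Frame := mkFrame uprod_pt uprod_nbhd uprod_inh.

Hypothesis F_mono : forall i, monotonic (F i).

Lemma uprod_nbhd_internal v S :
  uprod_nbhd v (internal S) <-> internal (fun i w => fN (F i) w (S i)) v.
Proof.
  split.
  - intros [z [Hz Hsub]]. apply internal_subset in Hsub.
    apply (uf_mono _ _ HU _ _ (uf_and _ _ HU _ _ Hz Hsub)).
    intros i [HN Hi]. exact (F_mono i _ _ _ HN Hi).
  - intros H. exists S. split; [exact H|]. intros w Hw; exact Hw.
Qed.

Lemma los phi : forall G : nat -> forall i, fW (F i),
  sat uprod (fun k => cls (G k)) phi <-> U (fun i => sat (F i) (fun k => G k i) phi).
Proof.
  assert (Eupd : forall G x h,
    upd (fun k => @cls _ ae_eq (G k)) x (cls h) = fun k => cls (upd G x h k)).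
  { intros G x h. apply functional_extensionality. intros k. unfold upd.
    destruct (Nat.eqb k x); reflexivity. }
  induction phi as [x y|p IH|p IH q IH2|p IH q IH2|x p IH|x y p IH]; intros G; simpl.
  - apply cls_eq_ae.
  - rewrite IH. symmetry. apply (uf_not _ _ HU).
  - rewrite IH, IH2. symmetry. apply (uf_and_iff _ _ HU).
  - rewrite IH, IH2. symmetry. apply (uf_or _ _ HU).
  - split.
    + intros [v Hv]. rewrite <- (cls_rep _ _ v), Eupd, IH in Hv.
      apply (uf_mono _ _ HU _ _ Hv). intros i Hi. exists (rep v i).
      rewrite upd_pointwise in Hi. exact Hi.
    + intros H.
      destruct (uf_choice _ _ HU _ (fun i => fW_inh (F i)) H) as [h Hh].
      exists (cls h). rewrite Eupd, IH.
      apply (uf_mono _ _ HU _ _ Hh). intros i Hi. rewrite upd_pointwise. exact Hi.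
  - set (S := fun i w => sat (F i) (upd (fun k => G k i) y w) p).
    assert (ES : (fun v : uprod_pt => sat uprod (upd (fun k => cls (G k)) y v) p)
                 = internal S).
    { apply pred_ext. intros v. rewrite <- (cls_rep _ _ v), Eupd, IH, internal_cls.
      apply (uf_ext _ _ HU). intros i. unfold S. rewrite upd_pointwise. reflexivity. }
    change (uprod_nbhd (cls (G x))
              (fun v : uprod_pt => sat uprod (upd (fun k => cls (G k)) y v) p)
            <-> U (fun i => fN (F i) (G x i) (S i))).
    rewrite ES, uprod_nbhd_internal. apply (internal_cls (fun i w => fN (F i) w (S i))).
Qed.

Lemma uprod_models phi : (forall i, models (F i) phi) -> models uprod phi.
Proof.
  intros H g. replace g with (fun k => @cls _ ae_eq (rep (g k))).
  - apply los, (uf_all _ _ HU). intros i. apply H.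
  - apply functional_extensionality. intros k. apply cls_rep.
Qed.

Lemma uprod_monotonic : monotonic uprod.
Proof. intros w X Y [z [H1 H2]] HXY. exists z. split; auto. intros v Hv; auto. Qed.

Lemma uprod_meet_closed : (forall i, meet_closed (F i)) -> meet_closed uprod.
Proof.
  intros Hc w X Y [z [Hz Hzs]] [z' [Hz' Hzs']].
  exists (fun i v => z i v /\ z' i v). split.
  - apply (uf_mono _ _ HU _ _ (uf_and _ _ HU _ _ Hz Hz')). intros i [A B]. apply Hc; auto.
  - intros v Hv. apply (uf_and_iff _ _ HU) in Hv. split; [apply Hzs|apply Hzs']; apply Hv.
Qed.

Lemma uprod_principal w (X0 : forall i, fW (F i) -> Prop) :
  U (fun i => forall X, fN (F i) (rep w i) X <-> subset (X0 i) X) ->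
  forall Y, uprod_nbhd w Y <-> subset (internal X0) Y.
Proof.
  intros HP Y. split.
  - intros [z [H1 H2]] v Hv. apply H2.
    apply (uf_mono _ _ HU _ _ (uf_and _ _ HU _ _ (uf_and _ _ HU _ _ HP H1) Hv)).
    intros i [[A B] C]. apply A in B. apply B, C.
  - intros Hs. exists X0. split; auto.
    apply (uf_mono _ _ HU _ _ HP). intros i Hi. apply Hi. intros v; auto.
Qed.

Lemma uprod_in_class c : (forall i, in_class c (F i)) -> in_class c uprod.
Proof.
  intros Hc.
  assert (Hprincipal : forall w, U (fun i => principal_upset (F i) (rep w i)) ->
            principal_upset uprod w).
  { intros w Hw. destruct (uf_choice _ _ HU _ (fun i => inhabits (fun _ => True)) Hw)
      as [X0 HX0].
    exists (internal X0). apply uprod_principal, HX0. }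
  assert (Hmeet : (forall i, quasi_filter (F i)) -> quasi_filter uprod).
  { intros Hq. apply quasi_filter_meet_closed. split; [apply uprod_monotonic|].
    apply uprod_meet_closed. intros i. apply quasi_filter_meet_closed, Hq. }
  destruct c; simpl in *.
  - apply uprod_monotonic.
  - apply Hmeet, Hc.
  - intros w. destruct (uf_em _ _ HU (fun i => forall X, ~ fN (F i) (rep w i) X))
      as [E|E].
    + left. intros X [z [Hz _]].
      destruct (uf_ex _ _ HU _ (uf_and _ _ HU _ _ E Hz)) as [i [Hi HN]]. exact (Hi _ HN).
    + right. apply Hprincipal. apply (uf_mono _ _ HU _ _ E).
      intros i Hi. destruct (Hc i (rep w i)); tauto.
  - split; [apply Hmeet; intros i; apply Hc|]. intros w.
    destruct (uf_choice _ _ HU (fun i X => fN (F i) (rep w i) X)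
                (fun i => inhabits (fun _ => True))) as [X HX].
    { apply (uf_all _ _ HU). intros i. apply Hc. }
    exists (fun _ => True), X. split; [exact HX|]. intros v _; trivial.
  - intros w. apply Hprincipal, (uf_all _ _ HU). intros i. apply Hc.
Qed.
End Ultraproduct.

Lemma elem_class_uprod c T I U (F : I -> Frame) :
  is_set_uf U -> (forall i, elem_class c T (F i)) -> elem_class c T (uprod I U F).
Proof.
  intros HU HF. split.
  - apply uprod_in_class; auto. intros i; apply HF.
  - intros phi Hphi. apply uprod_models; auto.
    + intros i. apply (in_class_monotonic c), HF.
    + intros i. apply HF, Hphi.
Qed.

Lemma is_hom_comp A B C f g :
  is_hom A B f -> is_hom B C g -> is_hom A C (fun x => g (f x)).
Proof.
  intros [f1 [f2 [f3 [f4 [f5 f6]]]]] [g1 [g2 [g3 [g4 [g5 g6]]]]].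
  repeat split; intros; rewrite ?f1, ?f2, ?f3, ?f4, ?f5, ?f6; auto.
Qed.

Lemma embeds_trans A B C : embeds A B -> embeds B C -> embeds A C.
Proof.
  intros [f [Hf Hfi]] [g [Hg Hgi]]. exists (fun x => g (f x)).
  split; [apply (is_hom_comp A B C); auto|]. auto.
Qed.

Lemma S_class_iff K A : S_class K A <-> exists F, K F /\ embeds A (cplx F).
Proof.
  split.
  - intros H. apply H.
    + intros F HF. exists F. split; auto. exists (fun x => x). repeat split; auto.
    + intros A' B' [F [HF HB]] HA. exists F. split; auto. apply (embeds_trans _ B'); auto.
  - intros [F [HF Hemb]] C HC Hsub. apply (Hsub A (cplx F)); auto.
Qed.

Lemma embeds_of_kernel A B C (pi : carrier A -> carrier B) (g : carrier A -> carrier C) :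
  is_hom A B pi -> (forall b, exists a, pi a = b) -> is_hom A C g ->
  (forall a a', pi a = pi a' <-> g a = g a') -> embeds B C.
Proof.
  intros [p1 [p2 [p3 [p4 [p5 p6]]]]] Hsurj [g1 [g2 [g3 [g4 [g5 g6]]]]] Hker.
  destruct (dep_choice (fun b a => pi a = b) Hsurj) as [s Hs].
  exists (fun b => g (s b)). split.
  - repeat split; intros;
      [rewrite <- g1|rewrite <- g2|rewrite <- g3|rewrite <- g4|rewrite <- g5|rewrite <- g6];
      apply Hker; rewrite ?p1, ?p2, ?p3, ?p4, ?p5, ?p6, ?Hs; reflexivity.
  - intros b b' E. rewrite <- (Hs b), <- (Hs b'). apply Hker, E.
Qed.

Definition prod_BAM {I : Type} (A : I -> BAM) : BAM := {|
  carrier := forall i, carrier (A i);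
  bjoin := fun x y i => bjoin (A i) (x i) (y i);
  bmeet := fun x y i => bmeet (A i) (x i) (y i);
  bcompl := fun x i => bcompl (A i) (x i);
  bbot := fun i => bbot (A i);
  btop := fun i => btop (A i);
  bbox := fun x i => bbox (A i) (x i)
|}.

Section UltraproductEmbedding.
Variables (I : Type) (U : (I -> Prop) -> Prop).
Hypothesis HU : is_set_uf U.
Variables (A : I -> BAM) (F : I -> Frame).
Hypothesis F_mono : forall i, monotonic (F i).
Variable f : forall i, carrier (A i) -> fW (F i) -> Prop.
Hypothesis f_hom : forall i, is_hom (A i) (cplx (F i)) (f i).
Hypothesis f_inj : forall i a b, f i a = f i b -> a = b.

Definition internal_image (x : carrier (prod_BAM A)) : carrier (cplx (uprod I U F)) :=
  internal I U F (fun i => f i (x i)).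

Lemma internal_image_hom : is_hom (prod_BAM A) (cplx (uprod I U F)) internal_image.
Proof.
  unfold internal_image, internal.
  repeat split; intros; apply pred_ext; intros v; simpl.
  - rewrite <- (uf_or _ _ HU). apply (uf_ext _ _ HU). intros i.
    destruct (f_hom i) as [E _]. rewrite E. reflexivity.
  - rewrite <- (uf_and_iff _ _ HU). apply (uf_ext _ _ HU). intros i.
    destruct (f_hom i) as [_ [E _]]. rewrite E. reflexivity.
  - rewrite <- (uf_not _ _ HU). apply (uf_ext _ _ HU). intros i.
    destruct (f_hom i) as [_ [_ [E _]]]. rewrite E. reflexivity.
  - rewrite <- (uf_const _ _ HU False). apply (uf_ext _ _ HU). intros i.
    destruct (f_hom i) as [_ [_ [_ [E _]]]]. rewrite E. reflexivity.
  - rewrite <- (uf_const _ _ HU True). apply (uf_ext _ _ HU). intros i.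
    destruct (f_hom i) as [_ [_ [_ [_ [E _]]]]]. rewrite E. reflexivity.
  - change (internal I U F (fun i => f i (bbox (A i) (a i))) v <->
            uprod_nbhd I U F v (internal I U F (fun i => f i (a i)))).
    rewrite (uprod_nbhd_internal I U HU F F_mono). apply (uf_ext _ _ HU). intros i.
    destruct (f_hom i) as [_ [_ [_ [_ [_ E]]]]]. rewrite E. reflexivity.
Qed.

Lemma internal_image_kernel x y :
  internal_image x = internal_image y <-> U (fun i => x i = y i).
Proof.
  split.
  - intros E. apply (internal_eq I U HU F) in E.
    apply (uf_mono _ _ HU _ _ E). intros i. apply f_inj.
  - intros E. apply pred_ext. intros v. unfold internal_image, internal.
    split; intros H; apply (uf_mono _ _ HU _ _ (uf_and _ _ HU _ _ E H));
      intros i [-> Hi]; exact Hi.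
Qed.
End UltraproductEmbedding.

Lemma S_class_ultraproduct c T I U (A : I -> BAM) B :
  is_set_uf U -> (forall i, S_class (elem_class c T) (A i)) ->
  is_ultraproduct U A B -> S_class (elem_class c T) B.
Proof.
  intros HU HA [pi [Hsurj [Hker Hops]]].
  assert (HF : forall i, exists F, elem_class c T F /\ embeds (A i) (cplx F))
    by (intros i; apply S_class_iff, HA).
  destruct (dep_choice _ HF) as [F HF'].
  destruct (dep_choice (fun i (g : carrier (A i) -> fW (F i) -> Prop) =>
                          is_hom (A i) (cplx (F i)) g /\ forall a b, g a = g b -> a = b)
              (fun i => proj2 (HF' i))) as [f Hf].
  apply S_class_iff. exists (uprod I U F). split.
  - apply elem_class_uprod; auto. intros i. apply HF'.
  - apply (embeds_of_kernel (prod_BAM A) B _ pi (internal_image I U A F f) Hops Hsurj).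
    + apply internal_image_hom; auto.
      * intros i. apply (in_class_monotonic c), HF'.
      * intros i. apply Hf.
    + intros x y. rewrite Hker, internal_image_kernel; [reflexivity|auto|].
      intros i. apply Hf.
Qed.

Section StepComposition.
Variable P : nat -> Type.
Variable step : forall m, P m -> P (S m).
Variable junk : forall m, P m.

(* [compose_steps n m] is [step (m-1) o ... o step n] when [n <= m], and the
   constant [junk m] when [m < n]. *)
Fixpoint compose_steps (n m : nat) (x : P n) {struct m} : P m :=
  match m as m0 return P m0 with
  | 0 => match Nat.eq_dec n 0 with left e => eq_rect n P x 0 e | right _ => junk 0 end
  | S m' => match Nat.eq_dec n (S m') with
            | left e => eq_rect n P x (S m') e
            | right _ => step m' (compose_steps n m' x) end
  end.

Lemma compose_steps_refl n x : compose_steps n n x = x.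
Proof.
  destruct n as [|n]; cbv beta iota delta [compose_steps].
  - destruct (Nat.eq_dec 0 0) as [e|e]; [|contradiction].
    rewrite (UIP_refl_nat 0 e); reflexivity.
  - destruct (Nat.eq_dec (S n) (S n)) as [e|e]; [|contradiction].
    rewrite (UIP_refl_nat (S n) e); reflexivity.
Qed.

Lemma compose_steps_S n m x :
  n <= m -> compose_steps n (S m) x = step m (compose_steps n m x).
Proof.
  intros H. cbv beta iota delta [compose_steps].
  destruct (Nat.eq_dec n (S m)); [lia|reflexivity].
Qed.

Lemma compose_steps_trans n m k x :
  n <= m -> m <= k -> compose_steps m k (compose_steps n m x) = compose_steps n k x.
Proof.
  intros Hnm Hmk. induction Hmk as [|k Hmk IH].
  - apply compose_steps_refl.
  - rewrite !compose_steps_S by lia. rewrite IH. reflexivity.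
Qed.
End StepComposition.

Section Ultrapower.
Variables (I : Type) (U : (I -> Prop) -> Prop).
Hypothesis HU : is_set_uf U.
Variable F : Frame.
Hypothesis F_mono : monotonic F.

Definition upow : Frame := uprod I U (fun _ => F).
Definition diag (x : fW F) : fW upow := cls (fun _ => x).
Definition star (Z : fW F -> Prop) : fW upow -> Prop := internal I U (fun _ => F) (fun _ => Z).

Lemma star_cls Z h : star Z (cls h) <-> U (fun i => Z (h i)).
Proof. apply (internal_cls I U HU (fun _ => F) (fun _ => Z)). Qed.

Lemma star_diag Z x : star Z (diag x) <-> Z x.
Proof. unfold diag. rewrite star_cls. apply (uf_const _ _ HU). Qed.

Lemma diag_inj x y : diag x = diag y -> x = y.
Proof. intros E. apply (cls_eq_ae I U HU) in E. apply (uf_const _ _ HU), E. Qed.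

Lemma star_nbhd Z v : star (fun x => fN F x Z) v <-> fN upow v (star Z).
Proof. symmetry. apply (uprod_nbhd_internal I U HU (fun _ => F) (fun _ => F_mono)). Qed.

Lemma nbhd_diag_star x Z : fN upow (diag x) (star Z) <-> fN F x Z.
Proof. rewrite <- star_nbhd. apply star_diag. Qed.

Lemma sat_diag phi g : sat upow (fun k => diag (g k)) phi <-> sat F g phi.
Proof.
  unfold upow, diag. rewrite (los I U HU (fun _ => F) (fun _ => F_mono) phi (fun k _ => g k)).
  apply (uf_const _ _ HU).
Qed.

Lemma star_definable g y p v :
  star (fun w => sat F (upd g y w) p) v <-> sat upow (upd (fun k => diag (g k)) y v) p.
Proof.
  rewrite <- (cls_rep _ _ v).
  replace (upd (fun k => diag (g k)) y (cls (rep v)))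
    with (fun k => @cls _ (ae_eq I U (fun _ => F)) (upd (fun k _ => g k) y (rep v) k)).
  - unfold upow. rewrite star_cls, (los I U HU (fun _ => F) (fun _ => F_mono)).
    apply (uf_ext _ _ HU). intros i. rewrite (upd_pointwise (T := fun _ => fW F)).
    reflexivity.
  - apply functional_extensionality. intros k. unfold upd. destruct (Nat.eqb k y); reflexivity.
Qed.

Lemma principal_diag x X0 : (forall W, fN F x W <-> subset X0 W) ->
  forall W, fN upow (diag x) W <-> subset (star X0) W.
Proof.
  intros H. apply (uprod_principal I U HU (fun _ => F) (diag x) (fun _ => X0)).
  apply (ae_transfer I U HU (fun _ => F) _ (fun _ => x)
           (fun _ w => forall X, fN F w X <-> subset X0 X) (rep_cls_ae I U HU _ _)).
  apply (uf_all _ _ HU). intros; apply H.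
Qed.

Lemma empty_nbhd_diag x : (forall W, ~ fN F x W) -> forall W, ~ fN upow (diag x) W.
Proof.
  intros H W [z [Hz _]].
  apply (ae_transfer I U HU (fun _ => F) _ (fun _ => x) (fun i w => fN F w (z i))
           (rep_cls_ae I U HU _ _)) in Hz.
  destruct (uf_ex _ _ HU _ Hz) as [i Hi]. exact (H _ Hi).
Qed.

Lemma star_true v : star (fun _ => True) v.
Proof. apply (uf_all _ _ HU). trivial. Qed.

Lemma star_false v : ~ star (fun _ => False) v.
Proof. intros H. exact (proj1 (uf_const _ _ HU False) H). Qed.

Lemma star_and Z Z' v : star (fun w => Z w /\ Z' w) v <-> star Z v /\ star Z' v.
Proof. apply (uf_and_iff _ _ HU). Qed.

Lemma star_not Z v : star (fun w => ~ Z w) v <-> ~ star Z v.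
Proof. apply (uf_not _ _ HU). Qed.

Lemma star_mono (Z Z' : fW F -> Prop) : subset Z Z' -> subset (star Z) (star Z').
Proof. intros H v Hv. apply (uf_mono _ _ HU _ _ Hv). intros i; apply H. Qed.
End Ultrapower.

Section UltrapowerChain.
Variable F0 : Frame.
Hypothesis F0_mono : monotonic F0.
Variable U0 : (list (fW F0 -> Prop) -> Prop) -> Prop.
Hypothesis HU0 : is_set_uf U0.

Fixpoint chain (n : nat) : Frame :=
  match n with 0 => F0 | S m => upow (list (fW F0 -> Prop)) U0 (chain m) end.

Definition pt (n : nat) : Type := fW (chain n).

Lemma chain_monotonic n : monotonic (chain n).
Proof. induction n; [exact F0_mono|apply uprod_monotonic]. Qed.

Lemma chain_in_class c n : in_class c F0 -> in_class c (chain n).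
Proof. intros H0. induction n; [exact H0|apply uprod_in_class; auto]. Qed.

Definition lift (n m : nat) : pt n -> pt m :=
  compose_steps pt (fun k => diag _ U0 (chain k))
    (fun k => epsilon (fW_inh (chain k)) (fun _ => True)) n m.

Definition lift_set (n m : nat) : (pt n -> Prop) -> pt m -> Prop :=
  compose_steps (fun k => pt k -> Prop) (fun k => star _ U0 (chain k)) (fun _ _ => False) n m.

Lemma lift_refl n x : lift n n x = x.
Proof. apply (compose_steps_refl pt). Qed.

Lemma lift_S n m x : n <= m -> lift n (S m) x = diag _ U0 (chain m) (lift n m x).
Proof. apply (compose_steps_S pt). Qed.

Lemma lift_trans n m k x : n <= m -> m <= k -> lift m k (lift n m x) = lift n k x.
Proof. apply (compose_steps_trans pt). Qed.

Lemma lift_set_refl n Z : lift_set n n Z = Z.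
Proof. apply (compose_steps_refl (fun k => pt k -> Prop)). Qed.

Lemma lift_set_S n m Z : n <= m -> lift_set n (S m) Z = star _ U0 (chain m) (lift_set n m Z).
Proof. apply (compose_steps_S (fun k => pt k -> Prop)). Qed.

Lemma lift_set_trans n m k Z :
  n <= m -> m <= k -> lift_set m k (lift_set n m Z) = lift_set n k Z.
Proof. apply (compose_steps_trans (fun k => pt k -> Prop)). Qed.

Lemma lift_inj n m x y : n <= m -> lift n m x = lift n m y -> x = y.
Proof.
  intros H. induction H as [|m H IH]; [rewrite !lift_refl; auto|].
  rewrite !lift_S by auto. intros E. apply IH, (diag_inj _ _ HU0), E.
Qed.

Lemma lift_set_lift n m Z x : n <= m -> (lift_set n m Z (lift n m x) <-> Z x).
Proof.
  intros H. induction H as [|m H IH]; [rewrite lift_set_refl, lift_refl; tauto|].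
  rewrite lift_set_S, lift_S, (star_diag _ _ HU0) by auto. exact IH.
Qed.

Lemma lift_set_true n m v : n <= m -> lift_set n m (fun _ => True) v.
Proof.
  intros H. revert v. induction H as [|m H IH]; intros v; [rewrite lift_set_refl; trivial|].
  rewrite lift_set_S by auto.
  exact (star_mono _ _ HU0 _ (fun _ => True) _ (fun w _ => IH w) v (star_true _ _ HU0 _ v)).
Qed.

Lemma lift_set_false n m v : n <= m -> ~ lift_set n m (fun _ => False) v.
Proof.
  intros H. revert v. induction H as [|m H IH]; intros v; [rewrite lift_set_refl; auto|].
  rewrite lift_set_S by auto. intros Hv.
  exact (star_false _ _ HU0 _ _ (star_mono _ _ HU0 _ _ (fun _ => False) IH v Hv)).
Qed.

Lemma lift_set_and n m Z Z' v : n <= m ->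
  (lift_set n m (fun w => Z w /\ Z' w) v <-> lift_set n m Z v /\ lift_set n m Z' v).
Proof.
  intros H. revert v. induction H as [|m H IH]; intros v; [rewrite !lift_set_refl; tauto|].
  rewrite !lift_set_S, <- (star_and _ _ HU0) by auto.
  split; apply (star_mono _ _ HU0); intros w; apply IH.
Qed.

Lemma lift_set_not n m Z v : n <= m ->
  (lift_set n m (fun w => ~ Z w) v <-> ~ lift_set n m Z v).
Proof.
  intros H. revert v. induction H as [|m H IH]; intros v; [rewrite !lift_set_refl; tauto|].
  rewrite !lift_set_S, <- (star_not _ _ HU0) by auto.
  split; apply (star_mono _ _ HU0); intros w; apply IH.
Qed.

Lemma lift_set_mono n m (Z Z' : pt n -> Prop) : n <= m -> subset Z Z' ->
  subset (lift_set n m Z) (lift_set n m Z').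
Proof.
  intros H HZ. induction H as [|m H IH]; [rewrite !lift_set_refl; auto|].
  rewrite !lift_set_S by auto. apply (star_mono _ _ HU0), IH.
Qed.

Lemma nbhd_lift n m x Z : n <= m ->
  (fN (chain m) (lift n m x) (lift_set n m Z) <-> fN (chain n) x Z).
Proof.
  intros H. induction H as [|m H IH]; [rewrite lift_refl, lift_set_refl; tauto|].
  rewrite lift_S, lift_set_S, (nbhd_diag_star _ _ HU0 _ (chain_monotonic m)) by auto.
  exact IH.
Qed.

Lemma lift_set_nbhd n m Z v : n <= m ->
  (lift_set n m (fun x => fN (chain n) x Z) v <-> fN (chain m) v (lift_set n m Z)).
Proof.
  intros H. revert v. induction H as [|m H IH]; intros v; [rewrite !lift_set_refl; tauto|].
  rewrite !lift_set_S by auto.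
  replace (lift_set n m (fun x => fN (chain n) x Z))
    with (fun x => fN (chain m) x (lift_set n m Z))
    by (apply pred_ext; intros; symmetry; apply IH).
  apply (star_nbhd _ _ HU0 _ (chain_monotonic m)).
Qed.

Lemma lift_pointwise n m (g : nat -> pt n) : n <= m ->
  (fun k => lift n (S m) (g k)) = (fun k => diag _ U0 (chain m) (lift n m (g k))).
Proof. intros H. apply functional_extensionality. intros k. apply lift_S, H. Qed.

Lemma sat_lift n m (g : nat -> pt n) phi : n <= m ->
  (sat (chain m) (fun k => lift n m (g k)) phi <-> sat (chain n) g phi).
Proof.
  intros H. induction H as [|m H IH].
  - replace (fun k => lift n n (g k)) with g; [tauto|].
    apply functional_extensionality. intros; symmetry; apply lift_refl.
  - rewrite lift_pointwise by auto. rewrite (sat_diag _ _ HU0 _ (chain_monotonic m)). exact IH.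
Qed.

Lemma lift_set_definable n m (g : nat -> pt n) y p v : n <= m ->
  (lift_set n m (fun w => sat (chain n) (upd g y w) p) v <->
   sat (chain m) (upd (fun k => lift n m (g k)) y v) p).
Proof.
  intros H. revert v. induction H as [|m H IH]; intros v.
  - rewrite lift_set_refl. replace (fun k => lift n n (g k)) with g; [tauto|].
    apply functional_extensionality. intros; symmetry; apply lift_refl.
  - rewrite lift_set_S, lift_pointwise by auto.
    replace (lift_set n m (fun w => sat (chain n) (upd g y w) p))
      with (fun w => sat (chain m) (upd (fun k => lift n m (g k)) y w) p)
      by (apply pred_ext; intros; symmetry; apply IH).
    apply (star_definable _ _ HU0 _ (chain_monotonic m)).
Qed.

Lemma principal_lift n m x X0 : n <= m -> (forall W, fN (chain n) x W <-> subset X0 W) ->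
  forall W, fN (chain m) (lift n m x) W <-> subset (lift_set n m X0) W.
Proof.
  intros H. induction H as [|m H IH]; intros HP; [rewrite lift_refl, lift_set_refl; auto|].
  rewrite lift_S, lift_set_S by auto. apply (principal_diag _ _ HU0). auto.
Qed.

Lemma empty_nbhd_lift n m x : n <= m -> (forall W, ~ fN (chain n) x W) ->
  forall W, ~ fN (chain m) (lift n m x) W.
Proof.
  intros H. induction H as [|m H IH]; intros HE; [rewrite lift_refl; auto|].
  rewrite lift_S by auto. apply (empty_nbhd_diag _ _ HU0). auto.
Qed.

Definition lim_rel (p q : {n : nat & pt n}) : Prop :=
  exists M, projT1 p <= M /\ projT1 q <= M /\
    lift (projT1 p) M (projT2 p) = lift (projT1 q) M (projT2 q).

Lemma lift_eq_above n m M1 M x y : n <= M1 -> m <= M1 -> M1 <= M ->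
  lift n M1 x = lift m M1 y -> lift n M x = lift m M y.
Proof.
  intros H1 H2 H3 E. rewrite <- (lift_trans n M1 M), <- (lift_trans m M1 M) by auto.
  rewrite E; reflexivity.
Qed.

Lemma lim_rel_refl p : lim_rel p p.
Proof. exists (projT1 p). auto. Qed.

Lemma lim_rel_sym p q : lim_rel p q -> lim_rel q p.
Proof. intros [M [A [B C]]]. exists M. auto. Qed.

Lemma lim_rel_trans p q r : lim_rel p q -> lim_rel q r -> lim_rel p r.
Proof.
  destruct p as [n x], q as [m y], r as [k z]; unfold lim_rel; simpl.
  intros [M1 [A1 [B1 C1]]] [M2 [A2 [B2 C2]]].
  exists (max M1 M2). split; [lia|split; [lia|]].
  rewrite (lift_eq_above n m M1 (max M1 M2) x y) by (auto; lia).
  apply (lift_eq_above m k M2); auto; lia.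
Qed.

Definition lim_pt := quot {n : nat & pt n} lim_rel.
Definition to_lim (n : nat) (x : pt n) : lim_pt := cls (existT _ n x).

Lemma to_lim_eq n x m y M :
  to_lim n x = to_lim m y -> n <= M -> m <= M -> lift n M x = lift m M y.
Proof.
  intros E H1 H2. apply (cls_eq _ _ lim_rel_refl lim_rel_sym lim_rel_trans) in E.
  destruct E as [M' [A [B C]]]. simpl in *.
  apply (lift_inj M (max M M')); [lia|].
  rewrite !lift_trans by lia. apply (lift_eq_above n m M'); auto; lia.
Qed.

Lemma to_lim_lift n m x : n <= m -> to_lim m (lift n m x) = to_lim n x.
Proof.
  intros H. apply (cls_eq _ _ lim_rel_refl lim_rel_sym lim_rel_trans).
  exists m. simpl. rewrite lift_refl. auto.
Qed.

Lemma to_lim_surj (q : lim_pt) : exists n x, q = to_lim n x.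
Proof.
  rewrite <- (cls_rep _ _ q). destruct (rep q) as [n x]. exists n, x. reflexivity.
Qed.

Lemma to_lim_inj n x y : to_lim n x = to_lim n y -> x = y.
Proof.
  intros E. rewrite <- (lift_refl n x), <- (lift_refl n y).
  apply (to_lim_eq n x n y n E); auto.
Qed.

Definition lim_set (n : nat) (Z : pt n -> Prop) (q : lim_pt) : Prop :=
  exists m y, q = to_lim m y /\ n <= m /\ lift_set n m Z y.

Lemma lim_set_to_lim n Z m y : n <= m -> (lim_set n Z (to_lim m y) <-> lift_set n m Z y).
Proof.
  intros H. split.
  - intros [m' [y' [E [H' S']]]].
    set (K := max m m').
    rewrite <- (lift_set_lift m K (lift_set n m Z) y), lift_set_trans by lia.
    rewrite (to_lim_eq m y m' y' K E) by lia.
    rewrite <- (lift_set_trans n m' K), lift_set_lift by lia. exact S'.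
  - intros S. exists m, y. auto.
Qed.

Lemma lim_set_lift_set n m Z : n <= m -> lim_set m (lift_set n m Z) = lim_set n Z.
Proof.
  intros H. apply pred_ext. intros q. destruct (to_lim_surj q) as [k [y ->]].
  rewrite <- (to_lim_lift k (max k m) y) by lia.
  rewrite !lim_set_to_lim, lift_set_trans by lia. tauto.
Qed.

Lemma lim_set_mono n (Z Z' : pt n -> Prop) :
  subset Z Z' -> subset (lim_set n Z) (lim_set n Z').
Proof.
  intros HZ q [m [y [E [H S]]]]. exists m, y. split; [exact E|]. split; [exact H|].
  apply (lift_set_mono n m Z Z' H HZ), S.
Qed.

Lemma lim_set_subset n (Z Z' : pt n -> Prop) :
  subset (lim_set n Z) (lim_set n Z') -> subset Z Z'.
Proof.
  intros H w Hw. rewrite <- (lift_set_refl n Z'), <- (lim_set_to_lim n Z' n w) by auto.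
  apply H. rewrite lim_set_to_lim, lift_set_refl by auto. exact Hw.
Qed.

Definition lim_nbhd (q : lim_pt) (Y : lim_pt -> Prop) : Prop :=
  exists n x Z, q = to_lim n x /\ fN (chain n) x Z /\ subset (lim_set n Z) Y.

Lemma lim_inh : inhabited lim_pt.
Proof. constructor. exact (to_lim 0 (epsilon (fW_inh F0) (fun _ => True))). Qed.

Definition limit : Frame := mkFrame lim_pt lim_nbhd lim_inh.

Lemma lim_nbhd_eventually n x Y : lim_nbhd (to_lim n x) Y ->
  exists k, forall M, n <= M -> k <= M ->
    exists Z, fN (chain M) (lift n M x) Z /\ subset (lim_set M Z) Y.
Proof.
  intros [m [x' [Z [E [HN HZ]]]]]. exists m. intros M Hn Hm.
  exists (lift_set m M Z). split.
  - rewrite (to_lim_eq n x m x' M E Hn Hm), nbhd_lift by auto. exact HN.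
  - rewrite lim_set_lift_set by auto. exact HZ.
Qed.

Lemma lim_nbhd_lim_set n x Z : lim_nbhd (to_lim n x) (lim_set n Z) <-> fN (chain n) x Z.
Proof.
  split.
  - intros Hnb. destruct (lim_nbhd_eventually n x _ Hnb) as [k Hk].
    destruct (Hk (max n k)) as [Z' [HN HZ']]; [lia|lia|].
    rewrite <- (nbhd_lift n (max n k)) by lia.
    apply (chain_monotonic _ _ _ _ HN). apply lim_set_subset.
    rewrite lim_set_lift_set by lia. exact HZ'.
  - intros H. exists n, x, Z. split; [reflexivity|]. split; [exact H|].
    intros q Hq; exact Hq.
Qed.

Lemma sat_limit phi : forall n (g : nat -> pt n),
  sat limit (fun k => to_lim n (g k)) phi <-> sat (chain n) g phi.
Proof.
  assert (Eupd : forall n m M (g : nat -> pt n) x y, n <= M -> m <= M ->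
    upd (fun k => to_lim n (g k)) x (to_lim m y)
    = fun k => to_lim M (upd (fun k => lift n M (g k)) x (lift m M y) k)).
  { intros n m M g x y H1 H2. apply functional_extensionality. intros k. unfold upd.
    destruct (Nat.eqb k x); symmetry; apply to_lim_lift; auto. }
  induction phi as [x y|p IH|p IH q IH2|p IH q IH2|x p IH|x y p IH]; intros n g; simpl.
  - split; [apply to_lim_inj|intros ->; reflexivity].
  - rewrite IH. tauto.
  - rewrite IH, IH2. tauto.
  - rewrite IH, IH2. tauto.
  - split.
    + intros [v Hv]. destruct (to_lim_surj v) as [m [y ->]].
      rewrite (Eupd n m (max n m)), IH in Hv by lia.
      apply (sat_lift n (max n m) g (FEx x p)); [lia|]. exists (lift m (max n m) y). exact Hv.
    + intros [w Hw]. exists (to_lim n w).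
      rewrite (Eupd n n n), IH by auto. rewrite lift_refl.
      replace (fun k => lift n n (g k)) with g; [exact Hw|].
      apply functional_extensionality. intros; symmetry; apply lift_refl.
  - set (Sn := fun w => sat (chain n) (upd g y w) p).
    assert (ES : (fun v : lim_pt => sat limit (upd (fun k => to_lim n (g k)) y v) p)
                 = lim_set n Sn).
    { apply pred_ext. intros v. destruct (to_lim_surj v) as [m [w ->]].
      rewrite (Eupd n m (max n m)), IH by lia.
      rewrite <- (to_lim_lift m (max n m) w), lim_set_to_lim by lia.
      unfold Sn. rewrite lift_set_definable by lia. tauto. }
    change (lim_nbhd (to_lim n (g x))
              (fun v : lim_pt => sat limit (upd (fun k => to_lim n (g k)) y v) p)
            <-> fN (chain n) (g x) Sn).
    rewrite ES. apply lim_nbhd_lim_set.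
Qed.

Lemma limit_models phi : sentence phi -> models F0 phi -> models limit phi.
Proof.
  intros Hs HF. set (w0 := epsilon (fW_inh F0) (fun _ => True)).
  apply (models_sentence limit phi (fun _ => to_lim 0 w0) Hs).
  apply (sat_limit phi 0 (fun _ => w0)), HF.
Qed.

Lemma limit_monotonic : monotonic limit.
Proof.
  intros q X Y [n [x [Z [E [H1 H2]]]]] HXY. exists n, x, Z.
  split; [exact E|]. split; [exact H1|]. intros q' Hq. apply HXY, H2, Hq.
Qed.

Lemma limit_meet_closed : (forall n, meet_closed (chain n)) -> meet_closed limit.
Proof.
  intros Hc q X Y HX HY. destruct (to_lim_surj q) as [n [x ->]].
  destruct (lim_nbhd_eventually n x X HX) as [k1 Hk1].
  destruct (lim_nbhd_eventually n x Y HY) as [k2 Hk2].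
  set (M := max n (max k1 k2)).
  destruct (Hk1 M) as [Z1 [HN1 HZ1]]; [lia|lia|].
  destruct (Hk2 M) as [Z2 [HN2 HZ2]]; [lia|lia|].
  exists M, (lift n M x), (fun v => Z1 v /\ Z2 v).
  split; [symmetry; apply to_lim_lift; lia|]. split; [apply Hc; auto|].
  intros q' Hq'. split; [apply HZ1|apply HZ2]; revert q' Hq'; apply lim_set_mono;
    intros v [H1 H2]; assumption.
Qed.

Lemma limit_principal n x X0 : (forall W, fN (chain n) x W <-> subset X0 W) ->
  forall Y, lim_nbhd (to_lim n x) Y <-> subset (lim_set n X0) Y.
Proof.
  intros HP Y. split.
  - intros Hnb. destruct (lim_nbhd_eventually n x Y Hnb) as [k Hk].
    destruct (Hk (max n k)) as [Z [HN HZ]]; [lia|lia|].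
    rewrite (principal_lift n (max n k) x X0) in HN by (auto; lia).
    rewrite <- (lim_set_lift_set n (max n k)) by lia.
    intros q Hq. apply HZ, (lim_set_mono _ _ _ HN), Hq.
  - intros Hs. exists n, x, X0. split; [reflexivity|]. split; [apply HP; intros v; auto|].
    exact Hs.
Qed.

Lemma limit_empty n x : (forall W, ~ fN (chain n) x W) -> forall Y, ~ lim_nbhd (to_lim n x) Y.
Proof.
  intros HE Y Hnb. destruct (lim_nbhd_eventually n x Y Hnb) as [k Hk].
  destruct (Hk (max n k)) as [Z [HN _]]; [lia|lia|].
  exact (empty_nbhd_lift n (max n k) x ltac:(lia) HE Z HN).
Qed.

Lemma limit_in_class c : in_class c F0 -> in_class c limit.
Proof.
  intros H0. pose proof (fun n => chain_in_class c n H0) as HF.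
  assert (Hq : quasi_filter F0 -> quasi_filter limit).
  { intros Hq0. apply quasi_filter_meet_closed. split; [apply limit_monotonic|].
    apply limit_meet_closed. intros n. apply quasi_filter_meet_closed.
    apply (chain_in_class QuasiFilter n Hq0). }
  destruct c; simpl in *.
  - apply limit_monotonic.
  - apply Hq, H0.
  - intros q. destruct (to_lim_surj q) as [n [x ->]].
    destruct (HF n x) as [E|[X0 HX0]].
    + left. intros Y. apply limit_empty, E.
    + right. exists (lim_set n X0). apply limit_principal, HX0.
  - split; [apply Hq, H0|]. intros q. destruct (to_lim_surj q) as [n [x ->]].
    destruct (proj2 (HF n) x) as [X HX]. exists (fun _ => True).
    exists n, x, X. split; [reflexivity|]. split; [exact HX|]. intros v _; trivial.
  - intros q. destruct (to_lim_surj q) as [n [x ->]].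
    destruct (HF n x) as [X0 HX0]. exists (lim_set n X0). apply limit_principal, HX0.
Qed.

Hypothesis U0_fine : forall S, U0 (fun l => In S l).
Variable A : BAM.
Variable f : carrier A -> fW F0 -> Prop.
Hypothesis f_hom : is_hom A (cplx F0) f.
Hypothesis f_inj : forall a b, f a = f b -> a = b.

Lemma meet_compl a : bmeet A a (bcompl A a) = bbot A.
Proof.
  apply f_inj. destruct f_hom as [_ [Hm [Hc [Hb _]]]].
  rewrite Hm, Hc, Hb. apply pred_ext. intros; simpl; tauto.
Qed.

Definition type_at (q : lim_pt) (a : carrier A) : Prop := lim_set 0 (f a) q.

Lemma type_at_uf q : is_uf A (type_at q).
Proof.
  destruct (to_lim_surj q) as [m [y ->]]. unfold type_at.
  assert (E : forall a, lim_set 0 (f a) (to_lim m y) <-> lift_set 0 m (f a) y)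
    by (intros; apply lim_set_to_lim; lia).
  destruct f_hom as [_ [Hm [Hc [Hb [Ht _]]]]].
  split; [|split; [|split; [|split]]].
  - rewrite E, Ht. apply lift_set_true; lia.
  - rewrite E, Hb. apply lift_set_false; lia.
  - intros a b. rewrite !E, Hm. intros Ha Ha'.
    apply (proj2 (lift_set_and 0 m (f a) (f b) y ltac:(lia))); auto.
  - intros a b Ha Hab. rewrite !E in *. apply (lift_set_mono 0 m (f a)); [lia| |exact Ha].
    intros w Hw. unfold ble in Hab. rewrite <- Hab, Hm in Hw. apply Hw.
  - intros a. rewrite !E, Hc. rewrite (lift_set_not 0 m (f a)) by lia. tauto.
Qed.

Definition type_of (q : lim_pt) : Uf A := exist _ (type_at q) (type_at_uf q).

Lemma uf_eq (u v : Uf A) : (forall a, proj1_sig u a -> proj1_sig v a) -> u = v.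
Proof.
  intros H. destruct u as [u Hu], v as [v Hv]. apply subset_eq_compat. simpl in H.
  apply pred_ext. intros a. split; [apply H|]. intros Ha.
  destruct Hu as [_ [_ [_ [_ Hem]]]]. destruct (Hem a) as [Hu|Hu]; auto.
  destruct Hv as [_ [Hbot [Hmeet _]]]. apply H in Hu.
  destruct (Hbot ltac:(rewrite <- (meet_compl a); apply Hmeet; auto)).
Qed.

Lemma finite_meet_below (P Q : carrier A -> Prop) : P (btop A) ->
  (forall a b, P a -> P b -> P (bmeet A a b)) -> (forall a, Q a -> P a) ->
  forall l : list (fW F0 -> Prop), exists b, P b /\
    forall a, Q a -> In (f a) l -> subset (f b) (f a).
Proof.
  intros Ht Hm HQ l. induction l as [|S l [b [Hb Hbl]]].
  - exists (btop A). split; auto. intros a _ [].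
  - destruct (classic (exists a, Q a /\ S = f a)) as [[a [Qa ->]]|N].
    + exists (bmeet A b a). split; auto.
      intros a' Qa' Ha' w Hw. destruct f_hom as [_ [E _]]. rewrite E in Hw.
      destruct Ha' as [Ha'|Ha']; [rewrite <- Ha'; apply Hw|apply (Hbl a'); auto; apply Hw].
    + exists b. split; auto. intros a' Qa' [Ha'|Ha']; [destruct N; eauto|auto].
Qed.

(* The witness at index [l] realises the finitely many members of [u] whose
   images are listed in [l]; fineness of [U0] makes the class realise all of [u]. *)
Lemma realize_uf n (Z : pt n -> Prop) (u : Uf A) :
  (forall b, proj1_sig u b -> exists w, Z w /\ lift_set 0 n (f b) w) ->
  exists y, lift_set n (S n) Z y /\ type_of (to_lim (S n) y) = u.
Proof.
  intros Hu. destruct u as [u Huf]. simpl in Hu.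
  assert (Hc : forall l : list (fW F0 -> Prop), exists w : pt n,
             Z w /\ forall a, u a -> In (f a) l -> lift_set 0 n (f a) w).
  { intros l. destruct Huf as [Ht [_ [Hm _]]].
    destruct (finite_meet_below u u Ht Hm (fun a H => H) l) as [b [Hb Hbl]].
    destruct (Hu b Hb) as [w [Zw Hw]]. exists w. split; auto.
    intros a Ha Hin. apply (lift_set_mono 0 n (f b) (f a)); auto; lia. }
  destruct (dep_choice _ Hc) as [h Hh]. exists (cls h).
  rewrite lift_set_S, lift_set_refl by lia. split.
  - apply (star_cls _ _ HU0). apply (uf_all _ _ HU0). intros l. apply Hh.
  - symmetry. apply uf_eq. intros a Ha. simpl. unfold type_at.
    rewrite lim_set_to_lim, lift_set_S, (star_cls _ _ HU0) by lia.
    apply (uf_mono _ _ HU0 _ _ (U0_fine (f a))). intros l Hl. apply (proj2 (Hh l) a Ha Hl).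
Qed.

Lemma type_of_surj (u : Uf A) : exists q, type_of q = u.
Proof.
  destruct (realize_uf 0 (fun _ => True) u) as [y [_ Hy]]; eauto.
  intros b Hb. apply NNPP. intros N. destruct (proj2_sig u) as [_ [Hbot _]].
  apply Hbot. replace (bbot A) with b; auto. apply f_inj.
  destruct f_hom as [_ [_ [_ [-> _]]]]. apply pred_ext. intros w.
  rewrite lift_set_refl in N. split; [intros Hw; apply N; eauto|simpl; tauto].
Qed.

Lemma type_of_to_lim n w a : proj1_sig (type_of (to_lim n w)) a <-> lift_set 0 n (f a) w.
Proof. apply lim_set_to_lim. lia. Qed.

Lemma type_of_box n x a :
  proj1_sig (type_of (to_lim n x)) (bbox A a) <-> fN (chain n) x (lift_set 0 n (f a)).
Proof.
  rewrite type_of_to_lim. destruct f_hom as [_ [_ [_ [_ [_ ->]]]]].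
  apply (lift_set_nbhd 0 n (f a)). lia.
Qed.

Definition type_preimage (X : Uf A -> Prop) : lim_pt -> Prop := fun q => X (type_of q).

Lemma box_sigma_lim_nbhd q X : box_sigma A X (type_of q) -> lim_nbhd q (type_preimage X).
Proof.
  unfold box_sigma, bracket, closed_set.
  intros [K [[D HD] [HKX HKbox]]]. destruct (to_lim_surj q) as [n [x ->]].
  set (z := fun (l : list (fW F0 -> Prop)) (w : pt n) =>
              forall a, D a -> In (f a) l -> lift_set 0 n (f a) w).
  exists (S n), (lift n (S n) x), (internal _ U0 (fun _ => chain n) z).
  split; [symmetry; apply to_lim_lift; lia|]. split.
  - rewrite lift_S, lift_refl by lia.
    apply (uprod_nbhd_internal _ _ HU0 _ (fun _ => chain_monotonic n)).
    apply (internal_cls _ _ HU0 _ (fun l w => fN (chain n) w (z l))).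
    apply (uf_all _ _ HU0). intros l.
    destruct (finite_meet_below (fun b => forall u, K u -> proj1_sig u b) D) with (l := l)
      as [b [Hb Hbl]].
    + intros u _. apply (proj2_sig u).
    + intros a b Ha Hb u Ku. apply (proj2_sig u); auto.
    + intros a Da u Ku. apply (proj1 (HD u) Ku a Da).
    + apply (chain_monotonic n _ (lift_set 0 n (f b))).
      * apply type_of_box, HKbox. exact Hb.
      * intros w Hw a Da Hin.
        exact (lift_set_mono 0 n (f b) (f a) ltac:(lia) (Hbl a Da Hin) w Hw).
  - intros q' Hq'. apply HKX, HD. intros d Dd. simpl. unfold type_at.
    rewrite <- (lim_set_lift_set 0 (S n)) by lia.
    revert q' Hq'. apply lim_set_mono. intros v Hv.
    rewrite lift_set_S by lia.
    apply (uf_mono _ _ HU0 _ _ (uf_and _ _ HU0 _ _ Hv (U0_fine (f d)))).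
    intros l [Hz Hin]. exact (Hz d Dd Hin).
Qed.

Lemma lim_nbhd_box_sigma q X : lim_nbhd q (type_preimage X) -> box_sigma A X (type_of q).
Proof.
  unfold box_sigma, bracket, closed_set.
  intros [n [x [Z [-> [HN HZ]]]]].
  set (D := fun a => subset Z (lift_set 0 n (f a))).
  exists (fun u : Uf A => forall a, D a -> proj1_sig u a).
  split; [exists D; tauto|]. split.
  - intros u Ku.
    destruct (realize_uf n Z u) as [y [Hy <-]].
    + intros b Hb. apply NNPP. intros N.
      assert (Dc : D (bcompl A b)).
      { intros w Zw. destruct f_hom as [_ [_ [-> _]]].
        rewrite (lift_set_not 0 n (f b)) by lia. intros Hw. apply N; eauto. }
      destruct (proj2_sig u) as [_ [Hbot [Hm _]]].
      apply Hbot. rewrite <- (meet_compl b). apply Hm; auto.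
    + apply HZ. rewrite lim_set_to_lim by lia. exact Hy.
  - intros a Ka. apply type_of_box. apply (chain_monotonic n _ _ _ HN).
    intros w Zw. apply type_of_to_lim, Ka. intros d Dd. apply type_of_to_lim, Dd, Zw.
Qed.

Lemma can_ext_embeds_limit : embeds (can_ext A) (cplx limit).
Proof.
  exists type_preimage. split.
  - repeat split. intros X. apply pred_ext. intros q.
    split; [exact (box_sigma_lim_nbhd q X)|exact (lim_nbhd_box_sigma q X)].
  - intros X Y E. apply pred_ext. intros u. destruct (type_of_surj u) as [q <-].
    change (type_preimage X q <-> type_preimage Y q). rewrite E. reflexivity.
Qed.
End UltrapowerChain.

Lemma S_class_can_ext c T (A : BAM) :
  (forall phi, T phi -> sentence phi) ->
  S_class (elem_class c T) A -> S_class (elem_class c T) (can_ext A).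
Proof.
  intros HT HA. apply S_class_iff in HA. destruct HA as [F0 [[Hc0 HM] [f [Hf Hfi]]]].
  destruct (fine_ultrafilter (fW F0 -> Prop)) as [U0 [HU0 Hfine]].
  assert (Hmono := in_class_monotonic c F0 Hc0).
  apply S_class_iff. exists (limit F0 U0). split.
  - split; [apply limit_in_class; auto|].
    intros phi Hphi. apply limit_models; auto.
  - apply (can_ext_embeds_limit F0 Hmono U0 HU0 Hfine A f); auto.
Qed.

Theorem lemma5p3 (c : FrameClass) (T : formula -> Prop)
    (HT : forall phi, T phi -> sentence phi) :
  (forall A : BAM, S_class (elem_class c T) A ->
     S_class (elem_class c T) (can_ext A)) /\
  (forall (I : Type) (U : (I -> Prop) -> Prop) (A : I -> BAM) (B : BAM),
     is_set_uf U ->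
     (forall i, S_class (elem_class c T) (A i)) ->
     is_ultraproduct U A B ->
     S_class (elem_class c T) B).
Proof.
  split.
  - intros A. apply S_class_can_ext, HT.
  - intros I U A B. apply S_class_ultraproduct.
Qed.
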